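(* Let $\mathcal{A}\in\mathbb{R}^{d\times\cdots\times d}$ be an order-$k$ real tensor with the same dimension $d$ in all modes. For every level $1\le\ell\le k$, \[ d^{-(k-\ell)/2}\max_{\pi\in\mathcal{P}^\ell_{[k]}}\|\mathrm{Unfold}_\pi(\mathcal{A})\|_\sigma\le\|\mathcal{A}\|_\sigma\le\min_{\pi\in\mathcal{P}^\ell_{[k]}}\|\mathrm{Unfold}_\pi(\mathcal{A})\|_\sigma . \]
   Context: For a real tensor $\mathcal{T}\in\mathbb{R}^{e_1\times\cdots\times e_m}$, $\|\mathcal{T}\|_\sigma=\sup\{\sum t_{i_1\dots i_m}x^{(1)}_{i_1}\cdots x^{(m)}_{i_m}:\ \mathbf{x}_n\in\mathbb{R}^{e_n},\ \|\mathbf{x}_n\|_2=1\}$. $\mathcal{P}^\ell_{[k]}$ is the set of partitions of $[k]=\{1,\dots,k\}$ into exactly $\ell$ nonempty blocks. Unfolding: for $\pi=\{B_1,\dots,B_\ell\}$, $\mathrm{Unfold}_\pi(\mathcal{A})$ is the order-$\ell$ tensor of dimensions $(d^{|B_1|},\dots,d^{|B_\ell|})$ whose entry at $(m_1,\dots,m_\ell)$ is $a_{i_1\dots i_k}$, where $m_j$ corresponds to $(i_r)_{r\in B_j}$ under a fixed bijection $[d]^{B_j}\to[d^{|B_j|}]$. *)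

From HB Require Import structures.
From mathcomp Require Import all_boot all_order all_algebra.
From mathcomp Require Import boolp classical_sets reals.
Unset Printing Implicit Defensive.
Import Order.TTheory GRing.Theory Num.Theory.
Local Open Scope ring_scope.
Local Open Scope classical_set_scope.

Definition tindex (m : nat) (e : 'I_m -> nat) := {dffun forall j : 'I_m, 'I_(e j)}.

Definition tensor (R : realType) (m : nat) (e : 'I_m -> nat) := tindex m e -> R.

Definition spec_norm (R : realType) (m : nat) (e : 'I_m -> nat)
    (T : tensor R m e) : R :=
  sup [set v : R | exists x : forall j : 'I_m, 'I_(e j) -> R,
         (forall j, \sum_(i < e j) x j i ^+ 2 = 1) /\
         v = \sum_(t : tindex m e) T t * \prod_(j < m) x j (t j)].

Definition cube (k d : nat) : 'I_k -> nat := fun _ => d.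

(* A partition of [k] into exactly l nonempty blocks B_1, ..., B_l is encoded
   by its block-labelling f : [k] -> [l], B_j = f^{-1}(j), with f surjective. *)
Definition partition_l (k l : nat) (f : {ffun 'I_k -> 'I_l}) : Prop :=
  forall j : 'I_l, exists r : 'I_k, f r = j.

Definition block (k l : nat) (f : {ffun 'I_k -> 'I_l}) (j : 'I_l) : {set 'I_k} :=
  [set r | f r == j].

Definition unfold_dims (k l d : nat) (f : {ffun 'I_k -> 'I_l}) : 'I_l -> nat :=
  fun j => (d ^ #|block k l f j|)%N.

Lemma card_block_idx (k l d : nat) (f : {ffun 'I_k -> 'I_l}) (j : 'I_l) :
  #|{ffun {r : 'I_k | f r == j} -> 'I_d}| = unfold_dims k l d f j.
Proof.
by rewrite card_ffun card_ord card_sig /unfold_dims /block cardsE.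
Qed.

Definition block_decode (k l d : nat) (f : {ffun 'I_k -> 'I_l}) (j : 'I_l)
    (m : 'I_(unfold_dims k l d f j)) : {ffun {r : 'I_k | f r == j} -> 'I_d} :=
  enum_val (cast_ord (esym (@card_block_idx k l d f j)) m).

(* Unfold_pi(A): entry at (m_1,...,m_l) is a_{i_1...i_k}, where (i_r)_{r in B_j}
   corresponds to m_j under the fixed bijection. *)
Definition unfold (R : realType) (k l d : nat) (f : {ffun 'I_k -> 'I_l})
    (A : tensor R k (cube k d)) : tensor R l (unfold_dims k l d f) :=
  fun m => A [ffun r : 'I_k =>
                @block_decode k l d f (f r) (m (f r)) (exist (fun s => f s == f r) r (eqxx (f r)))].

(* Contracting A against unit vectors x_1, ..., x_k is the same as contracting
   Unfold_pi(A) against the unit vectors y_j = (x) _{r in B_j} x_r, whence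
   ||A|| <= ||Unfold_pi(A)||.  Conversely, fix a representative rho(j) in each
   block B_j and unit vectors y_j for the unfolding.  For every t in [d]^k let
   x_t be the family that is the fibre of y_j through t along rho(j) on the
   representatives and the basis vector e_(t_r) elsewhere.  Every index of A
   arises from d^l choices of t, so d^l <Unfold_pi(A), y> = sum_t <A, x_t>,
   and each |<A, x_t>| is at most ||A|| times the product of the fibre norms.
   By Cauchy-Schwarz the sum over t of these products is at most
   sqrt(d^k * d^l), since their squares add up to d^l. *)

From HB Require Import structures.
From mathcomp Require Import all_boot all_order all_algebra.
From mathcomp Require Import boolp classical_sets reals.
From mathcomp Require Import ring lra.
Import Order.TTheory GRing.Theory Num.Theory.
Local Open Scope ring_scope.

Lemma sqr_le_sum_sqr {R : realDomainType} {I : finType} (F : I -> R) i :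
  F i ^+ 2 <= \sum_j F j ^+ 2.
Proof. by rewrite (bigD1 i) //= lerDl sumr_ge0 // => j _; apply: sqr_ge0. Qed.

Lemma sqr_sum_le_card_sum_sqr {R : realDomainType} {I : finType} (b : I -> R) :
  (\sum_i b i) ^+ 2 <= #|I|%:R * \sum_i b i ^+ 2.
Proof.
set S1 := \sum_i b i; set S2 := \sum_i b i ^+ 2; set n : R := #|I|%:R.
have : 0 <= \sum_i \sum_j (b i - b j) ^+ 2.
  by apply: sumr_ge0 => i _; apply: sumr_ge0 => j _; apply: sqr_ge0.
have -> : \sum_i \sum_j (b i - b j) ^+ 2
          = \sum_i \sum_j (b i ^+ 2 + b j ^+ 2) - 2 * \sum_i \sum_j b i * b j.
  rewrite mulr_sumr -sumrB; apply: eq_bigr => i _.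
  by rewrite mulr_sumr -sumrB; apply: eq_bigr => j _; ring.
have -> : \sum_i \sum_j (b i ^+ 2 + b j ^+ 2) = n * S2 + n * S2.
  rewrite (eq_bigr (fun i => n * b i ^+ 2 + S2)) => [|i _]; last first.
    by rewrite big_split sumr_const -mulr_natl.
  by rewrite big_split /= -mulr_sumr sumr_const -mulr_natl.
have -> : \sum_i \sum_j b i * b j = S1 ^+ 2.
  by rewrite expr2 big_distrl; apply: eq_bigr => i _; rewrite big_distrr.
lra.
Qed.

Lemma sum_sqr_delta {R : nzRingType} {n : nat} (a : 'I_n) :
  \sum_(i < n) ((i == a)%:R : R) ^+ 2 = 1.
Proof.
by rewrite (bigD1 a) //= eqxx expr1n big1 ?addr0 // => i /negbTE ->; rewrite expr0n.
Qed.

Lemma big_sig_prod {R : comNzRingType} {I : finType} (P : pred I) (F : I -> R) :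
  \prod_(i | P i) F i = \prod_(s : {i | P i}) F (val s).
Proof. exact: (big_sub P F). Qed.

Lemma sum_dffun_prod {R : comNzRingType} {I : finType} {T_ : I -> finType}
    (F : forall i, T_ i -> R) :
  \sum_(t : {dffun forall i, T_ i}) \prod_i F i (t i) = \prod_i \sum_(a : T_ i) F i a.
Proof.
pose P_ i : {ffun T_ i -> R} := [ffun a => F i a].
have P_E i a : P_ i a = F i a by rewrite ffunE.
rewrite (reindex (@dffun_of_fprod I T_)); last exact/onW_bij/dffun_of_fprod_bij.
under eq_bigr do under eq_bigr do rewrite ffunE -P_E.
rewrite (big_fprod 1 _ P_).
transitivity (\prod_i \sum_(j in tagged_with T_ i) untag 0 (P_ i) j).
  by rewrite bigA_distr_big_dep.
apply: eq_bigr => i _; under [RHS]eq_bigr do rewrite -P_E.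
exact: (esym (big_tag P_ i)).
Qed.

Section SpectralNorm.
Context {R : realType} {m : nat} {e : 'I_m -> nat}.
Implicit Types (T : tensor R m e) (x : forall j : 'I_m, 'I_(e j) -> R).

Definition contraction T x : R := \sum_(t : tindex m e) T t * \prod_(j < m) x j (t j).

Definition unit_family x : Prop := forall j, \sum_(i < e j) x j i ^+ 2 = 1.

Lemma unit_family_norm_le1 x j i : unit_family x -> `|x j i| <= 1.
Proof.
move=> ux; have := sqr_le_sum_sqr (x j) i; rewrite ux => le_sqr.
by rewrite ler_norml; apply/andP; split; nra.
Qed.

Lemma norm_contraction_le_sum_norm T x :
  unit_family x -> `|contraction T x| <= \sum_t `|T t|.
Proof.
move=> ux; apply: le_trans (ler_norm_sum _ _ _) _; apply: ler_sum => t _.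
rewrite normrM normr_prod -[leRHS]mulr1 ler_wpM2l //.
by apply: prodr_ile1 => j _; rewrite normr_ge0 unit_family_norm_le1.
Qed.

Lemma contractionZ T x (c : 'I_m -> R) :
  contraction T (fun j i => c j * x j i) = \prod_j c j * contraction T x.
Proof.
rewrite /contraction mulr_sumr; apply: eq_bigr => t _.
by rewrite big_split /= mulrCA.
Qed.

Lemma contraction_eq0 T x j : (forall i, x j i = 0) -> contraction T x = 0.
Proof.
by move=> xj0; rewrite /contraction big1 // => t _; rewrite (bigD1 j) //= xj0 !mul0r mulr0.
Qed.

Hypothesis e_gt0 : forall j, (0 < e j)%N.

Lemma unit_family_exists : exists x, unit_family x.
Proof.
by exists (fun j i => (i == Ordinal (e_gt0 j))%:R) => j; apply: sum_sqr_delta.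
Qed.

Lemma has_sup_contractions T :
  has_sup [set v : R | exists x, unit_family x /\ v = contraction T x].
Proof.
split; first by have [x ux] := unit_family_exists; exists (contraction T x), x.
exists (\sum_t `|T t|) => _ [x [ux ->]].
exact: le_trans (ler_norm _) (norm_contraction_le_sum_norm _ _ ux).
Qed.

Lemma contraction_le_spec_norm T x :
  unit_family x -> contraction T x <= spec_norm R m e T.
Proof. by move=> ux; apply: (sup_upper_bound (has_sup_contractions T)); exists x. Qed.

Lemma spec_norm_le T M :
  (forall x, unit_family x -> contraction T x <= M) -> spec_norm R m e T <= M.
Proof.
move=> le_M; apply: ge_sup; first by case: (has_sup_contractions T).
by move=> _ [x [ux ->]]; apply: le_M.
Qed.

Hypothesis m_gt0 : (0 < m)%N.

Lemma norm_contraction_le_spec_norm T x :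
  unit_family x -> `|contraction T x| <= spec_norm R m e T.
Proof.
move=> ux; rewrite ler_norml contraction_le_spec_norm // andbT lerNl.
pose sgn j : R := if j == Ordinal m_gt0 then -1 else 1.
have sgn_sqr j : sgn j ^+ 2 = 1 by rewrite /sgn; case: eqP; rewrite ?sqrrN expr1n.
have -> : - contraction T x = contraction T (fun j i => sgn j * x j i).
  by rewrite contractionZ (bigD1 (Ordinal m_gt0)) //= big1 => [|j /negbTE];
    rewrite /sgn ?eqxx ?mulr1 ?mulN1r // => ->.
apply: contraction_le_spec_norm => j.
by under eq_bigr do rewrite exprMn sgn_sqr mul1r; apply: ux.
Qed.

Lemma spec_norm_ge0 T : 0 <= spec_norm R m e T.
Proof.
have [x ux] := unit_family_exists.
exact: le_trans (normr_ge0 _) (norm_contraction_le_spec_norm _ _ ux).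
Qed.

Lemma norm_contraction_le_prod_norm T x :
  `|contraction T x| <= spec_norm R m e T * \prod_j Num.sqrt (\sum_i x j i ^+ 2).
Proof.
pose n j := Num.sqrt (\sum_i x j i ^+ 2).
have sum_sqr_ge0 j : 0 <= \sum_i x j i ^+ 2 by apply: sumr_ge0 => i _; apply: sqr_ge0.
have [[j0]|n_neq0] := pselect (exists j, n j == 0).
  rewrite sqrtr_eq0 => xj0; rewrite (contraction_eq0 _ _ j0); last first.
    move=> i; apply/eqP; rewrite -sqrf_eq0 eq_le sqr_ge0 andbT.
    by apply: le_trans (sqr_le_sum_sqr _ i) xj0.
  by rewrite normr0 mulr_ge0 ?spec_norm_ge0 ?prodr_ge0 // => j _; apply: sqrtr_ge0.
have {}n_neq0 j : n j != 0 by apply/negP => nj0; apply: n_neq0; exists j.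
have -> : contraction T x = \prod_j n j * contraction T (fun j i => x j i / n j).
  rewrite -contractionZ; apply: eq_bigr => t _; congr (_ * _).
  by apply: eq_bigr => j _; rewrite mulrC divfK.
have prod_n_ge0 : 0 <= \prod_j n j by apply: prodr_ge0 => j _; apply: sqrtr_ge0.
rewrite normrM ger0_norm // [leRHS]mulrC ler_wpM2l //.
apply: norm_contraction_le_spec_norm => j.
under eq_bigr do rewrite expr_div_n.
rewrite -mulr_suml sqr_sqrtr // divff //.
by apply: contraNneq (n_neq0 j) => sum0; rewrite /n sum0 sqrtr0.
Qed.

End SpectralNorm.

Section Unfolding.
Context {R : realType} {k l d : nat} (f : {ffun 'I_k -> 'I_l}).
Implicit Types (A : tensor R k (cube k d))
  (y : forall j : 'I_l, 'I_(unfold_dims k l d f j) -> R).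

Local Notation dims := (unfold_dims k l d f).
Local Notation block_fun j := {ffun {r : 'I_k | f r == j} -> 'I_d}.

Definition block_encode {j} (g : block_fun j) : 'I_(dims j) :=
  cast_ord (card_block_idx k l d f j) (enum_rank g).

Lemma block_encodeK j : cancel (@block_encode j) (block_decode k l d f j).
Proof. by move=> g; rewrite /block_decode /block_encode cast_ordK enum_rankK. Qed.

Lemma block_decodeK j : cancel (block_decode k l d f j) (@block_encode j).
Proof. by move=> m; rewrite /block_decode /block_encode enum_valK cast_ordKV. Qed.

Definition restrict_block j (t : {ffun 'I_k -> 'I_d}) : block_fun j :=
  [ffun s => t (val s)].

Definition fold_index (t : {ffun 'I_k -> 'I_d}) : tindex l dims :=
  [ffun j => block_encode (restrict_block j t)].

Definition unfold_index (m : tindex l dims) : {ffun 'I_k -> 'I_d} :=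
  [ffun r => block_decode k l d f (f r) (m (f r)) (exist _ r (eqxx (f r)))].

Lemma unfold_indexE m {r j} (frj : f r == j) :
  unfold_index m r = block_decode k l d f j (m j) (exist _ r frj).
Proof.
have frj' := eqP frj; subst j.
by rewrite ffunE (bool_irrelevance frj (eqxx (f r))).
Qed.

Lemma fold_index_block (t t' : {ffun 'I_k -> 'I_d}) j :
  (forall r, f r == j -> t r = t' r) -> fold_index t j = fold_index t' j.
Proof.
move=> eq_tt'; rewrite !ffunE; congr block_encode.
by apply/ffunP => s; rewrite !ffunE; apply: eq_tt' (valP s).
Qed.

Lemma unfold_indexK : cancel unfold_index fold_index.
Proof.
move=> m; apply/ffunP => j; rewrite ffunE -[RHS]block_decodeK; congr block_encode.
by apply/ffunP => -[r frj]; rewrite ffunE (unfold_indexE m frj).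
Qed.

Lemma fold_indexK : cancel fold_index unfold_index.
Proof.
by move=> t; apply/ffunP => r; rewrite !ffunE block_encodeK ffunE.
Qed.

Lemma unfold_index_bij : bijective unfold_index.
Proof. by exists fold_index; [apply: unfold_indexK | apply: fold_indexK]. Qed.

Lemma contraction_unfold A y :
  contraction (unfold R k l d f A) y = \sum_t A t * \prod_j y j (fold_index t j).
Proof.
rewrite [RHS](reindex unfold_index); last exact/onW_bij/unfold_index_bij.
by apply: eq_bigr => m _; rewrite unfold_indexK.
Qed.

Lemma sum_prod_sqr_fold_index y :
  unit_family y -> \sum_t \prod_j y j (fold_index t j) ^+ 2 = 1.
Proof.
move=> uy; rewrite (reindex unfold_index); last exact/onW_bij/unfold_index_bij.
under eq_bigr do rewrite unfold_indexK.
by rewrite (sum_dffun_prod (fun j i => y j i ^+ 2)) big1.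
Qed.

End Unfolding.

Section UpperBound.
Context {R : realType} {k l d : nat} (f : {ffun 'I_k -> 'I_l}).

Definition block_family (x : forall r : 'I_k, 'I_(cube k d r) -> R) :
    forall j : 'I_l, 'I_(unfold_dims k l d f j) -> R :=
  fun j m => \prod_(s : {r : 'I_k | f r == j}) x (val s) (block_decode k l d f j m s).

Lemma unit_block_family x : unit_family x -> unit_family (block_family x).
Proof.
move=> ux j; rewrite (reindex (@block_encode k l d f j)); last first.
  by apply: onW_bij; exists (block_decode k l d f j);
    [apply: block_encodeK | apply: block_decodeK].
under eq_bigr do rewrite /block_family block_encodeK -prodrXl.
rewrite -(bigA_distr_bigA (fun s (i : 'I_d) => x (val s) i ^+ 2)) /=.
by rewrite big1 // => s _; apply: ux.
Qed.

Lemma contraction_unfold_block_family A x :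
  contraction (unfold R k l d f A) (block_family x) = contraction A x.
Proof.
rewrite contraction_unfold; apply: eq_bigr => t _; congr (_ * _).
rewrite [RHS](partition_big f xpredT) //=; apply: eq_bigr => j _.
by rewrite big_sig_prod; apply: eq_bigr => s _; rewrite ffunE block_encodeK ffunE.
Qed.

Lemma spec_norm_le_unfold A : (0 < d)%N ->
  spec_norm R k (cube k d) A <= spec_norm R l (unfold_dims k l d f) (unfold R k l d f A).
Proof.
move=> d_gt0; apply: spec_norm_le => // x ux.
rewrite -contraction_unfold_block_family.
apply: contraction_le_spec_norm; last exact: unit_block_family.
by move=> j; rewrite expn_gt0 d_gt0.
Qed.

End UpperBound.

Definition set_coord {k d : nat} (t : {ffun 'I_k -> 'I_d}) (r : 'I_k) (i : 'I_d) :
  {ffun 'I_k -> 'I_d} := [ffun r' => if r' == r then i else t r'].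

Section LowerBound.
Context {R : realType} {k l d : nat} (f : {ffun 'I_k -> 'I_l}).
Implicit Types (t : {ffun 'I_k -> 'I_d}) (u : {ffun 'I_l -> 'I_d}) (A : tensor R k (cube k d))
  (y : forall j : 'I_l, 'I_(unfold_dims k l d f j) -> R).

Variable rho : 'I_l -> 'I_k.
Hypothesis f_rho : forall j, f (rho j) = j.

Definition reps t : {ffun 'I_l -> 'I_d} := [ffun j => t (rho j)].

Definition replace_reps t u : {ffun 'I_k -> 'I_d} :=
  [ffun r => if r == rho (f r) then u (f r) else t r].

Lemma reps_replace t u : reps (replace_reps t u) = u.
Proof. by apply/ffunP => j; rewrite !ffunE f_rho eqxx. Qed.

Lemma replace_reps_reps t u : replace_reps (replace_reps t u) (reps t) = t.
Proof. by apply/ffunP => r; rewrite !ffunE; case: eqP => // <-. Qed.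

Lemma sum_replace_reps (F : {ffun 'I_k -> 'I_d} -> R) :
  \sum_t \sum_(u : {ffun 'I_l -> 'I_d}) F (replace_reps t u) = (d ^ l)%:R * \sum_t F t.
Proof.
pose swap p := (replace_reps p.1 p.2, reps p.1).
have swapK : involutive swap.
  by move=> [t u]; rewrite /swap /= replace_reps_reps reps_replace.
rewrite pair_big (reindex_inj (inv_inj swapK)) /=.
under eq_bigr do rewrite replace_reps_reps.
rewrite -(pair_big xpredT xpredT (fun t (_ : {ffun 'I_l -> 'I_d}) => F t)) /=.
rewrite mulr_sumr; apply: eq_bigr => t _.
by rewrite sumr_const card_ffun !card_ord mulr_natl.
Qed.

Lemma prod_reps (G : 'I_l -> R) :
  \prod_r (if r == rho (f r) then G (f r) else 1) = \prod_j G j.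
Proof.
rewrite -big_mkcond (reindex_onto rho f) => [|r /eqP <-//].
by apply: eq_big => [j|j _]; rewrite f_rho ?eqxx.
Qed.

Definition slice_family y t : forall r : 'I_k, 'I_d -> R :=
  fun r i => if r == rho (f r) then y (f r) (fold_index f (set_coord t r i) (f r))
             else (i == t r)%:R.

Lemma prod_slice_family y t t' :
  \prod_r slice_family y t r (t' r) =
  if t' == replace_reps t (reps t') then \prod_j y j (fold_index f t' j) else 0.
Proof.
case: ifP => [/eqP t'E | t'N].
  rewrite -prod_reps; apply: eq_bigr => r _; rewrite /slice_family.
  case: eqP => [rE | /eqP/negbTE rN]; last by rewrite {1}t'E ffunE rN eqxx.
  congr (y _); apply: fold_index_block => r' /eqP fr'.
  rewrite ffunE; case: eqP => [-> // | r'N].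
  by rewrite t'E ffunE; case: eqP => // r'E; case: r'N; rewrite r'E fr' -rE.
have [r] : exists r, t' r != replace_reps t (reps t') r.
  apply/existsP; apply: contraFT t'N => /existsPn t'E.
  by apply/eqP/ffunP => r; apply/eqP/negPn.
rewrite ffunE; case: (r =P rho (f r)) => [rE | /eqP/negbTE rN t'rN].
  by rewrite ffunE -rE eqxx.
by rewrite (bigD1 r) //= /slice_family rN (negbTE t'rN) mul0r.
Qed.

Lemma sum_contraction_slice_family A y :
  \sum_t contraction A (slice_family y t) = (d ^ l)%:R * contraction (unfold R k l d f A) y.
Proof.
rewrite contraction_unfold -sum_replace_reps; apply: eq_bigr => t _.
rewrite /contraction.
under eq_bigr do rewrite prod_slice_family (fun_if (fun v => _ * v)) mulr0.
rewrite -big_mkcond (reindex_onto (replace_reps t) reps) => [|t' /eqP <-//].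
by apply: eq_bigl => u; rewrite reps_replace !eqxx.
Qed.

Definition fibre_norm y t j : R :=
  Num.sqrt (\sum_i y j (fold_index f (set_coord t (rho j) i) j) ^+ 2).

Lemma norm_contraction_slice_family_le A y t : (0 < k)%N -> (0 < d)%N ->
  `|contraction A (slice_family y t)| <=
    spec_norm R k (cube k d) A * \prod_j fibre_norm y t j.
Proof.
move=> k_gt0 d_gt0.
apply: le_trans (norm_contraction_le_prod_norm (fun _ => d_gt0) k_gt0 _ _) _.
have slice_norm r : Num.sqrt (\sum_i slice_family y t r i ^+ 2) =
    if r == rho (f r) then fibre_norm y t (f r) else 1.
  rewrite /slice_family /fibre_norm; case: eqP => [rE | _]; first by rewrite -rE.
  by rewrite sum_sqr_delta sqrtr1.
by under eq_bigr do rewrite slice_norm; rewrite prod_reps.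
Qed.

Lemma sum_prod_fibre_norm_le y : unit_family y ->
  \sum_t \prod_j fibre_norm y t j <= Num.sqrt ((d ^ k)%:R * (d ^ l)%:R).
Proof.
move=> uy; pose a t := \prod_j fibre_norm y t j.
have a_ge0 t : 0 <= a t by apply: prodr_ge0 => j _; apply: sqrtr_ge0.
have fibre_norm_sqr t j :
    fibre_norm y t j ^+ 2 = \sum_i y j (fold_index f (set_coord t (rho j) i) j) ^+ 2.
  by rewrite sqr_sqrtr // sumr_ge0 // => i _; apply: sqr_ge0.
have sum_a_sqr : \sum_t a t ^+ 2 = (d ^ l)%:R.
  transitivity (\sum_t \sum_u \prod_j y j (fold_index f (replace_reps t u) j) ^+ 2).
    apply: eq_bigr => t _; rewrite /a -prodrXl.
    under eq_bigr do rewrite fibre_norm_sqr.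
    rewrite bigA_distr_bigA /=; apply: eq_bigr => u _; apply: eq_bigr => j _.
    congr (y j _ ^+ 2); apply: fold_index_block => r /eqP <-.
    by rewrite !ffunE; case: eqP.
  rewrite (sum_replace_reps (fun t => \prod_j y j (fold_index f t j) ^+ 2)).
  by rewrite sum_prod_sqr_fold_index // mulr1.
have sum_a_ge0 : 0 <= \sum_t a t by apply: sumr_ge0.
rewrite -(ger0_norm sum_a_ge0) -sqrtr_sqr ler_sqrt ?mulr_ge0 //.
apply: le_trans (sqr_sum_le_card_sum_sqr a) _.
by rewrite sum_a_sqr card_ffun !card_ord.
Qed.

Lemma spec_norm_unfold_le A : (0 < k)%N -> (0 < d)%N -> (l <= k)%N ->
  spec_norm R l (unfold_dims k l d f) (unfold R k l d f A)
    <= Num.sqrt (d%:R ^+ (k - l)) * spec_norm R k (cube k d) A.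
Proof.
move=> k_gt0 d_gt0 le_lk; apply: spec_norm_le => [j | y uy].
  by rewrite expn_gt0 d_gt0.
have dl_gt0 : (0 : R) < (d ^ l)%:R by rewrite ltr0n expn_gt0 d_gt0.
have sqrt_dkdl : Num.sqrt ((d ^ k)%:R * (d ^ l)%:R : R)
    = (d ^ l)%:R * Num.sqrt (d%:R ^+ (k - l)).
  have -> : ((d ^ k)%:R * (d ^ l)%:R : R) = (d ^ l)%:R ^+ 2 * d%:R ^+ (k - l).
    by rewrite -{1}(subnK le_lk) expnD !natrM natrX; ring.
  by rewrite sqrtrM ?sqr_ge0 // sqrtr_sqr ger0_norm.
rewrite -(ler_pM2l dl_gt0) -sum_contraction_slice_family.
rewrite mulrA -sqrt_dkdl [leRHS]mulrC.
apply: le_trans (ler_sum _ (fun t _ => ler_norm _)) _.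
apply: le_trans (ler_sum _ (fun t _ =>
  norm_contraction_slice_family_le A y t k_gt0 d_gt0)) _.
by rewrite -mulr_sumr ler_wpM2l ?spec_norm_ge0 ?sum_prod_fibre_norm_le.
Qed.

End LowerBound.

Theorem corollary4p11 (R : realType) (k d l : nat) (A : tensor R k (cube k d)) :
  (0 < d)%N -> (1 <= l)%N -> (l <= k)%N ->
  forall f : {ffun 'I_k -> 'I_l}, partition_l k l f ->
    (Num.sqrt ((d%:R : R) ^+ (k - l)))^-1 * spec_norm R l (unfold_dims k l d f) (unfold R k l d f A)
      <= spec_norm R k (cube k d) A
    /\ spec_norm R k (cube k d) A <= spec_norm R l (unfold_dims k l d f) (unfold R k l d f A).
Proof.
move=> d_gt0 l_gt0 le_lk f f_onto.
have k_gt0 : (0 < k)%N := leq_trans l_gt0 le_lk.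
have [rho f_rho] := choice f_onto.
split; last exact: spec_norm_le_unfold.
have sqrt_gt0 : 0 < Num.sqrt ((d%:R : R) ^+ (k - l)) by rewrite sqrtr_gt0 exprn_gt0 ?ltr0n.
by rewrite ler_pdivrMl // (spec_norm_unfold_le _ _ f_rho).
Qed.
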